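(* Let $(A,B,R)$ be a normalized formal context with $A$ and $B$ finite, and let $\{(X_i^*,Y_i^* )\mid i\in I\}$ be the set of all join-irreducible elements of $(\mathcal{C}_N,\leq)$. Then $\{X_i^*\mid i\in I\}$ is a partition of $B$ and $\{Y_i^*\mid i\in I\}$ is a partition of $A$.
   Context: A formal context is a triple $(A,B,R)$ with $R\subseteq A\times B$. The necessity operators are $X^{\uparrow_N}=\{a\in A\mid \text{for all } b\in B,\ (a,b)\in R\Rightarrow b\in X\}$ for $X\subseteq B$, and $Y^{\downarrow^N}=\{b\in B\mid \text{for all } a\in A,\ (a,b)\in R\Rightarrow a\in Y\}$ for $Y\subseteq A$. $\mathcal{C}_N=\{(X,Y)\mid X\subseteq B,\ Y\subseteq A,\ X^{\uparrow_N}=Y,\ Y^{\downarrow^N}=X\}$, ordered by $(X_1,Y_1)\leq(X_2,Y_2)$ iff $X_1\subseteq X_2$ (equivalently $Y_1\subseteq Y_2$); it is a complete lattice with join $(X_1\cup X_2,Y_1\cup Y_2)$, meet $(X_1\cap X_2,Y_1\cap Y_2)$, bottom $(\varnothing,\varnothing)$ and top $(B,A)$. The context is normalized if for every $a\in A$ there are $b,b'\in B$ with $(a,b)\in R$, $(a,b')\notin R$, and for every $b\in B$ there are $a,a'\in A$ with $(a,b)\in R$, $(a',b)\notin R$. An element $x$ of a lattice is join-irreducible if $x$ is not the bottom element and $x=y\vee z$ implies $x=y$ or $x=z$. *)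

From mathcomp Require Import all_boot.
Set Implicit Arguments. Unset Strict Implicit. Unset Printing Implicit Defensive.

Section Context.
Variables (A B : finType) (R : A -> B -> bool).

Definition upN (X : {set B}) : {set A} :=
  [set a | [forall b, R a b ==> (b \in X)]].

Definition downN (Y : {set A}) : {set B} :=
  [set b | [forall a, R a b ==> (a \in Y)]].

Definition inCN (p : {set B} * {set A}) : bool :=
  (upN p.1 == p.2) && (downN p.2 == p.1).

Definition normalized : Prop :=
  (forall a : A, (exists b, R a b) /\ (exists b', ~~ R a b')) /\
  (forall b : B, (exists a, R a b) /\ (exists a', ~~ R a' b)).

(* join-irreducible elements of (C_N, <=): in C_N, not the bottom (set0, set0),
   and x = y \/ z (join in C_N = componentwise union) implies x = y or x = z. *)
Definition join_irreducibleN (p : {set B} * {set A}) : bool :=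
  [&& inCN p, p != (set0, set0) &
   [forall q : {set B} * {set A}, forall r : {set B} * {set A},
     [&& inCN q, inCN r & p == (q.1 :|: r.1, q.2 :|: r.2)] ==> ((p == q) || (p == r))]].

Definition JIset : {set {set B} * {set A}} := [set p | join_irreducibleN p].
End Context.

From mathcomp Require Import all_boot.
Set Implicit Arguments. Unset Strict Implicit. Unset Printing Implicit Defensive.

(* When every object and every attribute is incident to something, (X, Y) is
   in C_N exactly when it is closed: for a R b, a \in Y iff b \in X, i.e. X + Y
   is a union of connected components of the bipartite incidence graph.  Closed
   pairs are stable under intersection and difference, so a join-irreducible p
   containing a vertex v lies below every element q containing v (otherwise
   p = (p :&: q) \/ (p :\: q) splits it); hence two join-irreducibles sharing a
   vertex coincide.  The least element containing v is join-irreducible, so the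
   join-irreducibles cover both A and B, and none of their sides is empty since
   every vertex has a neighbour. *)

Lemma partition_imset (I T : finType) (f : I -> {set T}) (S : {set I}) :
    (forall x, exists2 i, i \in S & x \in f i) ->
    (forall i j x, i \in S -> j \in S -> x \in f i -> x \in f j -> i = j) ->
    (forall i, i \in S -> f i != set0) ->
  partition (f @: S) [set: T].
Proof.
move=> cover_f uniq_f f_neq0; apply/and3P; split.
- apply/eqP/setP => x; rewrite in_setT; apply/bigcupP.
  by have [i iS xi] := cover_f x; exists (f i); first exact: imset_f.
- apply/trivIsetP => _ _ /imsetP[i iS ->] /imsetP[j jS ->] fij.
  apply/pred0P => x /=; apply/negbTE/andP => -[xi xj].
  by move: fij; rewrite (uniq_f i j x iS jS xi xj) eqxx.
- by apply/imsetP => -[i iS f0]; move: (f_neq0 i iS); rewrite -f0 eqxx.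
Qed.

Section JoinIrreducibles.
Variables (A B : finType) (R : A -> B -> bool).
Notation pair := ({set B} * {set A})%type.

Definition R_closed (p : pair) := forall a b, R a b -> (a \in p.2) = (b \in p.1).

Lemma inCN_R_closed p : inCN R p -> R_closed p.
Proof.
case: p => X Y /andP[/= /eqP upX /eqP downY] a b Rab /=; apply/idP/idP.
- by rewrite -upX inE => /forallP/(_ b)/implyP; apply.
- by rewrite -downY inE => /forallP/(_ a)/implyP; apply.
Qed.

Lemma R_closedI p q : R_closed p -> R_closed q -> R_closed (p.1 :&: q.1, p.2 :&: q.2).
Proof. by move=> cp cq a b Rab; rewrite !inE (cp _ _ Rab) (cq _ _ Rab). Qed.

Lemma R_closedD p q : R_closed p -> R_closed q -> R_closed (p.1 :\: q.1, p.2 :\: q.2).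
Proof. by move=> cp cq a b Rab; rewrite !inE (cp _ _ Rab) (cq _ _ Rab). Qed.

(* A vertex of the incidence graph: an attribute [inl b] or an object [inr a]. *)
Definition pair_mem (v : B + A) (p : pair) : bool :=
  match v with inl b => b \in p.1 | inr a => a \in p.2 end.

Lemma pair_mem0 v : pair_mem v (set0, set0) = false.
Proof. by case: v => x; rewrite /= inE. Qed.

Lemma pair_memU v p q : pair_mem v (p.1 :|: q.1, p.2 :|: q.2) = pair_mem v p || pair_mem v q.
Proof. by case: v => x; rewrite /= inE. Qed.

Lemma pair_memD v p q : pair_mem v (p.1 :\: q.1, p.2 :\: q.2) = ~~ pair_mem v q && pair_mem v p.
Proof. by case: v => x; rewrite /= inE. Qed.

Lemma pair_eqEsubset (p q : pair) :
  (p == q) = [&& p.1 \subset q.1, p.2 \subset q.2, q.1 \subset p.1 & q.2 \subset p.2].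
Proof.
case: p q => [X Y] [X' Y'] /=.
by rewrite xpair_eqE !eqEsubset -!andbA; congr (_ && _); apply: andbCA.
Qed.

Definition cell (v : B + A) : pair :=
  (\bigcap_(q | inCN R q && pair_mem v q) q.1,
   \bigcap_(q | inCN R q && pair_mem v q) q.2).

Lemma cell_R_closed v : R_closed (cell v).
Proof.
move=> a b Rab /=; apply/bigcapP/bigcapP => mem q /andP[qCN qv].
- by rewrite -(inCN_R_closed qCN Rab); apply: mem; rewrite qCN.
- by rewrite (inCN_R_closed qCN Rab); apply: mem; rewrite qCN.
Qed.

Lemma mem_cell v : pair_mem v (cell v).
Proof. by case: v => x /=; apply/bigcapP => q /andP[]. Qed.

Lemma cell_min v q : inCN R q -> pair_mem v q ->
  ((cell v).1 \subset q.1) && ((cell v).2 \subset q.2).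
Proof. by move=> qCN qv; rewrite !bigcap_inf // qCN. Qed.

Lemma JI_inCN p : p \in JIset R -> inCN R p.
Proof. by rewrite inE => /and3P[]. Qed.

Lemma JI_split p q r : p \in JIset R -> inCN R q -> inCN R r ->
  p = (q.1 :|: r.1, q.2 :|: r.2) -> p = q \/ p = r.
Proof.
rewrite inE => /and3P[_ _ /forallP/(_ q)/forallP/(_ r)/implyP split_p] qCN rCN pqr.
by have /orP[/eqP|/eqP] := split_p (introT and3P (And3 qCN rCN (introT eqP pqr)));
  [left|right].
Qed.

Hypothesis R_row_nonempty : forall a, exists b, R a b.
Hypothesis R_col_nonempty : forall b, exists a, R a b.

Lemma R_closed_inCN p : R_closed p -> inCN R p.
Proof.
case: p => X Y /= cl; apply/andP; split; apply/eqP/setP => x; rewrite inE /=.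
- apply/forallP/idP => [Xx | Yx b].
  + by have [b Rxb] := R_row_nonempty x; rewrite (cl _ _ Rxb) (implyP (Xx b)).
  + by apply/implyP => Rxb; rewrite -(cl _ _ Rxb).
- apply/forallP/idP => [Yx | Xx a].
  + by have [a Rax] := R_col_nonempty x; rewrite -(cl _ _ Rax) (implyP (Yx a)).
  + by apply/implyP => Rax; rewrite (cl _ _ Rax).
Qed.

Lemma cell_JI v : cell v \in JIset R.
Proof.
have cellCN := R_closed_inCN (cell_R_closed v).
rewrite inE; apply/and3P; split => //.
  by apply: contraTneq (mem_cell v) => ->; rewrite pair_mem0.
apply/forallP => q; apply/forallP => r; apply/implyP => /and3P[qCN rCN /eqP cell_qr].
have := mem_cell v; rewrite cell_qr pair_memU => /orP[qv|rv]; apply/orP.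
- left; have := cell_min qCN qv; rewrite cell_qr pair_eqEsubset /=.
  by rewrite !subsetUl !andbT.
- right; have := cell_min rCN rv; rewrite cell_qr pair_eqEsubset /=.
  by rewrite !subsetUr !andbT.
Qed.

Lemma JI_sub p q v : p \in JIset R -> R_closed q -> pair_mem v p -> pair_mem v q ->
  (p.1 \subset q.1) && (p.2 \subset q.2).
Proof.
move=> pJI cq pv qv; have cp := inCN_R_closed (JI_inCN pJI).
have pIqCN := R_closed_inCN (R_closedI cp cq).
have pDqCN := R_closed_inCN (R_closedD cp cq).
have p_IU_D : p = ((p.1 :&: q.1) :|: (p.1 :\: q.1), (p.2 :&: q.2) :|: (p.2 :\: q.2)).
  by case: p {pJI cp pIqCN pDqCN pv} => X Y; rewrite /= !setID.
case: (JI_split pJI pIqCN pDqCN p_IU_D).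
- by move=> ->; rewrite !subsetIr.
- by move=> pD; move: pv; rewrite pD pair_memD qv.
Qed.

Lemma JI_eq p q v : p \in JIset R -> q \in JIset R -> pair_mem v p -> pair_mem v q ->
  p = q.
Proof.
move=> pJI qJI pv qv; apply/eqP; rewrite pair_eqEsubset.
have /andP[-> ->] := JI_sub pJI (inCN_R_closed (JI_inCN qJI)) pv qv.
by have /andP[-> ->] := JI_sub qJI (inCN_R_closed (JI_inCN pJI)) qv pv.
Qed.

Lemma JI_neq0 p : p \in JIset R -> (p.1 != set0) && (p.2 != set0).
Proof.
move=> pJI; have cp := inCN_R_closed (JI_inCN pJI).
move: pJI; rewrite inE => /and3P[_ p_neq0 _].
case: p cp p_neq0 => X Y /= cp; apply: contraNT; rewrite negb_and !negbK.
case/orP=> /eqP p0; rewrite xpair_eqE p0 eqxx ?andbT /=; apply/eqP/setP => x.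
- by have [b Rxb] := R_row_nonempty x; rewrite (cp _ _ Rxb) p0 !inE.
- by have [a Rax] := R_col_nonempty x; rewrite -(cp _ _ Rax) p0 !inE.
Qed.

End JoinIrreducibles.

Theorem mainTheorem3 (A B : finType) (R : A -> B -> bool) :
  normalized R ->
  partition [set p.1 | p in JIset R] [set: B] /\
  partition [set p.2 | p in JIset R] [set: A].
Proof.
case=> rows cols.
have row_nonempty a : exists b, R a b by case: (rows a).
have col_nonempty b : exists a, R a b by case: (cols b).
split; apply: partition_imset.
- by move=> b; exists (cell R (inl b)); [apply: cell_JI | apply: (mem_cell R (inl b))].
- by move=> p q b pJI qJI pb qb; exact: (JI_eq row_nonempty col_nonempty (v := inl b) pJI qJI pb qb).
- by move=> p pJI; case/andP: (JI_neq0 row_nonempty col_nonempty pJI).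
- by move=> a; exists (cell R (inr a)); [apply: cell_JI | apply: (mem_cell R (inr a))].
- by move=> p q a pJI qJI pa qa; exact: (JI_eq row_nonempty col_nonempty (v := inr a) pJI qJI pa qa).
- by move=> p pJI; case/andP: (JI_neq0 row_nonempty col_nonempty pJI).
Qed.
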